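(* Let $(G,u)$ be a unital po-group such that $G$ satisfies RIP. If the pseudo effect algebra $E=\Gamma(G,u)$ satisfies RDP$_1$, then $G$ satisfies RDP$_1$.
   Context: A po-group is a (not necessarily Abelian, additively written) group with a partial order $\le$ such that $a\le b$ implies $x+a+y\le x+b+y$; $G^+$ is its positive cone. A unital po-group $(G,u)$ is a po-group with a strong unit $u\in G^+$ (for each $g\in G$ there is $k\ge1$ with $g\le ku$). $\Gamma(G,u)=\{g\in G:0\le g\le u\}$ is a pseudo effect algebra with constants $0,u$ and partial addition: $a+b$ is defined (equal to the group sum) iff $a+b\le u$. RIP: whenever $a_i\le b_j$ for all $i,j\in\{1,2\}$, there is $c$ with $a_i\le c\le b_j$ for all $i,j$. RDP$_1$ for a po-group $G$: for all $a_1,a_2,b_1,b_2\in G^+$ with $a_1+a_2=b_1+b_2$ there are $c_{11},c_{12},c_{21},c_{22}\in G^+$ with $a_1=c_{11}+c_{12}$, $a_2=c_{21}+c_{22}$, $b_1=c_{11}+c_{21}$, $b_2=c_{12}+c_{22}$, and such that $0\le x\le c_{12}$, $0\le y\le c_{21}$ imply $x+y=y+x$. RDP$_1$ for a pseudo effect algebra $E$ is defined identically with $G^+$ replaced by $E$ and all sums required to be defined in $E$. *)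

From Stdlib Require Import Arith.

Record pogroup := PoGroup {
  car :> Type;
  gadd : car -> car -> car;
  gzero : car;
  gopp : car -> car;
  gle : car -> car -> Prop;
  gaddA : forall x y z, gadd x (gadd y z) = gadd (gadd x y) z;
  gadd0l : forall x, gadd gzero x = x;
  gadd0r : forall x, gadd x gzero = x;
  gaddNl : forall x, gadd (gopp x) x = gzero;
  gaddNr : forall x, gadd x (gopp x) = gzero;
  gle_refl : forall x, gle x x;
  gle_trans : forall x y z, gle x y -> gle y z -> gle x z;
  gle_antisym : forall x y, gle x y -> gle y x -> x = y;
  gle_compat : forall a b x y, gle a b -> gle (gadd x (gadd a y)) (gadd x (gadd b y))
}.

Arguments gadd {p} _ _.
Arguments gzero {p}.
Arguments gopp {p} _.
Arguments gle {p} _ _.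

Fixpoint gnat {G : pogroup} (k : nat) (u : G) : G :=
  match k with
  | O => gzero
  | S k' => gadd u (gnat k' u)
  end.

Definition strong_unit (G : pogroup) (u : G) : Prop :=
  gle gzero u /\ forall g : G, exists k : nat, 1 <= k /\ gle g (gnat k u).

Definition inGamma {G : pogroup} (u : G) (g : G) : Prop := gle gzero g /\ gle g u.

Definition RIP (G : pogroup) : Prop :=
  forall a1 a2 b1 b2 : G,
    gle a1 b1 -> gle a1 b2 -> gle a2 b1 -> gle a2 b2 ->
    exists c : G, gle a1 c /\ gle a2 c /\ gle c b1 /\ gle c b2.

Definition RDP1_group (G : pogroup) : Prop :=
  forall a1 a2 b1 b2 : G,
    gle gzero a1 -> gle gzero a2 -> gle gzero b1 -> gle gzero b2 ->
    gadd a1 a2 = gadd b1 b2 ->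
    exists c11 c12 c21 c22 : G,
      gle gzero c11 /\ gle gzero c12 /\ gle gzero c21 /\ gle gzero c22 /\
      a1 = gadd c11 c12 /\ a2 = gadd c21 c22 /\
      b1 = gadd c11 c21 /\ b2 = gadd c12 c22 /\
      (forall x y : G, gle gzero x -> gle x c12 -> gle gzero y -> gle y c21 ->
         gadd x y = gadd y x).

(* RDP_1 for the pseudo effect algebra E = Gamma(G,u), whose partial sum
   a + b is defined (and equal to the group sum) iff a + b <= u. *)
Definition RDP1_Gamma (G : pogroup) (u : G) : Prop :=
  forall a1 a2 b1 b2 : G,
    inGamma u a1 -> inGamma u a2 -> inGamma u b1 -> inGamma u b2 ->
    gle (gadd a1 a2) u -> gle (gadd b1 b2) u ->
    gadd a1 a2 = gadd b1 b2 ->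
    exists c11 c12 c21 c22 : G,
      inGamma u c11 /\ inGamma u c12 /\ inGamma u c21 /\ inGamma u c22 /\
      gle (gadd c11 c12) u /\ gle (gadd c21 c22) u /\
      gle (gadd c11 c21) u /\ gle (gadd c12 c22) u /\
      a1 = gadd c11 c12 /\ a2 = gadd c21 c22 /\
      b1 = gadd c11 c21 /\ b2 = gadd c12 c22 /\
      (forall x y : G, inGamma u x -> gle x c12 -> inGamma u y -> gle y c21 ->
         gle (gadd x y) u /\ gle (gadd y x) u /\ gadd x y = gadd y x).

(* Call a quadruple a1 + a2 = b1 + b2 of positive elements decomposable if it
   admits an RDP_1 table.  If a1, b1 <= u, interpolate m between p := a1,
   p' := b1 and a1 + a2, u: then m = a1 + r = b1 + r' is an equation inside
   Gamma(G,u), and its table extends to the original one by adding the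
   remainder n = -m + (a1 + a2) to c22.  Tables can be stacked: a table for
   (p, q + a2; b1, b2) and one for (q, a2; c21, c22) give a table for
   (p + q, a2; b1, b2), the new commutation condition following from Riesz
   decomposition (a consequence of RIP).  Since every positive element is
   below some k u, splitting a1 into k pieces below u removes the bound on a1;
   by symmetry of the tables the same argument removes the bound on b1. *)

Declare Scope pg_scope.
Local Infix "+" := gadd : pg_scope.
Local Notation "- x" := (gopp x) : pg_scope.
Local Infix "<=" := gle : pg_scope.
Local Notation "0" := gzero : pg_scope.
Local Open Scope pg_scope.

Section PoGroup.

Variable G : pogroup.
Implicit Types a b c d p q x y z : G.

Lemma gle_add2l x y z : x <= y -> z + x <= z + y.
Proof. intro H. pose proof (gle_compat G x y z 0 H) as K. now rewrite !gadd0r in K. Qed.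

Lemma gle_add2r x y z : x <= y -> x + z <= y + z.
Proof. intro H. pose proof (gle_compat G x y 0 z H) as K. now rewrite !gadd0l in K. Qed.

Lemma gle_addl a b : 0 <= a -> b <= a + b.
Proof. intro H. pose proof (gle_add2r _ _ b H) as K. now rewrite gadd0l in K. Qed.

Lemma gle_addr a b : 0 <= a -> b <= b + a.
Proof. intro H. pose proof (gle_add2l _ _ b H) as K. now rewrite gadd0r in K. Qed.

Lemma gadd_ge0 a b : 0 <= a -> 0 <= b -> 0 <= a + b.
Proof. intros Ha Hb. apply (gle_trans G _ b); [exact Hb | now apply gle_addl]. Qed.

Lemma gsubr_ge0 x y : x <= y -> 0 <= -x + y.
Proof. intro H. pose proof (gle_add2l _ _ (-x) H) as K. now rewrite gaddNl in K. Qed.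

Lemma gaddKl a b : a + (-a + b) = b.
Proof. now rewrite gaddA, gaddNr, gadd0l. Qed.

Lemma gaddNKl a b : -a + (a + b) = b.
Proof. now rewrite gaddA, gaddNl, gadd0l. Qed.

Lemma gnat_ge0 (u : G) (k : nat) : 0 <= u -> 0 <= gnat k u.
Proof. intro H. induction k; simpl; [apply gle_refl | now apply gadd_ge0]. Qed.

Lemma riesz_decomp_of_RIP : RIP G -> forall x a b,
  0 <= x -> x <= a + b -> 0 <= a -> 0 <= b ->
  exists x1 x2, x = x1 + x2 /\ 0 <= x1 /\ x1 <= a /\ 0 <= x2 /\ x2 <= b.
Proof.
  intros rip x a b Hx Hxab Ha Hb.
  assert (Hxb_a : x + -b <= a).
  { pose proof (gle_add2r _ _ (-b) Hxab) as K.
    now rewrite <- gaddA, gaddNr, gadd0r in K. }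
  assert (Hxb_x : x + -b <= x).
  { pose proof (gle_compat G 0 b x (-b) Hb) as K.
    now rewrite gadd0l, gaddNr, gadd0r in K. }
  destruct (rip 0 (x + -b) a x Ha Hx Hxb_a Hxb_x) as [c [Hc0 [Hc [Hca Hcx]]]].
  exists c, (-c + x); repeat split; auto.
  - now rewrite gaddKl.
  - now apply gsubr_ge0.
  - pose proof (gle_add2r _ _ b Hc) as K.
    rewrite <- gaddA, gaddNl, gadd0r in K.
    pose proof (gle_add2l _ _ (-c) K) as K'. now rewrite gaddNKl in K'.
Qed.

Definition commute_below c d : Prop :=
  forall x y, 0 <= x -> x <= c -> 0 <= y -> y <= d -> x + y = y + x.

Definition rdp1_table a1 a2 b1 b2 : Prop :=
  exists c11 c12 c21 c22,
    0 <= c11 /\ 0 <= c12 /\ 0 <= c21 /\ 0 <= c22 /\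
    a1 = c11 + c12 /\ a2 = c21 + c22 /\
    b1 = c11 + c21 /\ b2 = c12 + c22 /\
    commute_below c12 c21.

Definition rdp1_on (A B : G -> Prop) : Prop :=
  forall a1 a2 b1 b2, 0 <= a1 -> 0 <= a2 -> 0 <= b1 -> 0 <= b2 ->
    A a1 -> B b1 -> a1 + a2 = b1 + b2 -> rdp1_table a1 a2 b1 b2.

Lemma rdp1_table_transpose a1 a2 b1 b2 :
  rdp1_table a1 a2 b1 b2 -> rdp1_table b1 b2 a1 a2.
Proof.
  intros [c11 [c12 [c21 [c22 [H11 [H12 [H21 [H22 [E1 [E2 [E3 [E4 C]]]]]]]]]]]].
  exists c11, c21, c12, c22; repeat split; auto.
  intros x y Hx Hxc Hy Hyc. symmetry. now apply C.
Qed.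

Lemma rdp1_on_sym A B : rdp1_on A B -> rdp1_on B A.
Proof.
  intros HAB a1 a2 b1 b2 Ha1 Ha2 Hb1 Hb2 Ba1 Ab1 E.
  apply rdp1_table_transpose. now apply HAB.
Qed.

Lemma rdp1_on_Gamma (u : G) : RIP G -> RDP1_Gamma G u ->
  rdp1_on (fun a => a <= u) (fun b => b <= u).
Proof.
  intros rip rdp p r p' r' Hp Hr Hp' Hr' Hpu Hp'u E.
  unfold RDP1_Gamma, inGamma in rdp.
  set (s := p + r).
  assert (Hps : p <= s) by now apply gle_addr.
  assert (Hp's : p' <= s) by (unfold s; rewrite E; now apply gle_addr).
  destruct (rip p p' s u Hps Hpu Hp's Hp'u) as [m [Hpm [Hp'm [Hms Hmu]]]].
  set (r1 := -p + m); set (r1' := -p' + m); set (n := -m + s).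
  assert (Em : p + r1 = m) by apply gaddKl.
  assert (Em' : p' + r1' = m) by apply gaddKl.
  assert (Hr1 : 0 <= r1) by now apply gsubr_ge0.
  assert (Hr1' : 0 <= r1') by now apply gsubr_ge0.
  assert (Hr1u : r1 <= u).
  { apply (gle_trans G _ m); [rewrite <- Em; now apply gle_addl | exact Hmu]. }
  assert (Hr1'u : r1' <= u).
  { apply (gle_trans G _ m); [rewrite <- Em'; now apply gle_addl | exact Hmu]. }
  assert (Er : r = r1 + n) by (unfold r1, n, s; now rewrite <- gaddA, gaddKl, gaddNKl).
  assert (Er' : r' = r1' + n)
    by (unfold r1', n, s; now rewrite <- gaddA, gaddKl, E, gaddNKl).
  destruct (rdp p r1 p' r1' (conj Hp Hpu) (conj Hr1 Hr1u) (conj Hp' Hp'u)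
              (conj Hr1' Hr1'u))
    as [c11 [c12 [c21 [c22 [[H11 _] [[H12 H12u] [[H21 H21u] [[H22 _]
        [_ [_ [_ [_ [F1 [F2 [F3 [F4 C]]]]]]]]]]]]]]]];
    [now rewrite Em | now rewrite Em' | now rewrite Em, Em' |].
  exists c11, c12, c21, (c22 + n); repeat split; auto.
  - apply gadd_ge0; [exact H22 | now apply gsubr_ge0].
  - now rewrite Er, F2, gaddA.
  - now rewrite Er', F4, gaddA.
  - intros x y Hx Hxc Hy Hyc.
    apply (C x y); auto; split; auto.
    + now apply (gle_trans G _ c12).
    + now apply (gle_trans G _ c21).
Qed.

Lemma rdp1_table_stack : RIP G -> forall p q a2 b1 b2,
  0 <= p -> 0 <= q -> 0 <= a2 ->
  rdp1_table p (q + a2) b1 b2 ->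
  (forall d21 d22, 0 <= d21 -> d21 <= b1 -> 0 <= d22 -> q + a2 = d21 + d22 ->
     rdp1_table q a2 d21 d22) ->
  rdp1_table (p + q) a2 b1 b2.
Proof.
  intros rip p q a2 b1 b2 Hp Hq Ha2 Td Te.
  destruct Td as [d11 [d12 [d21 [d22 [D11 [D12 [D21 [D22 [E1 [E2 [E3 [E4 Cd]]]]]]]]]]]].
  assert (Hd21 : d21 <= b1) by (rewrite E3; now apply gle_addl).
  destruct (Te d21 d22 D21 Hd21 D22 E2)
    as [e11 [e12 [e21 [e22 [F11 [F12 [F21 [F22 [G1 [G2 [G3 [G4 Ce]]]]]]]]]]]].
  assert (He11 : e11 <= d21) by (rewrite G3; now apply gle_addr).
  assert (He21 : e21 <= d21) by (rewrite G3; now apply gle_addl).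
  exists (d11 + e11), (d12 + e12), e21, e22; repeat split; auto.
  - now apply gadd_ge0.
  - now apply gadd_ge0.
  - rewrite E1, G1, <- !gaddA. f_equal. rewrite !gaddA. f_equal.
    apply Cd; auto using gle_refl.
  - now rewrite E3, G3, gaddA.
  - now rewrite E4, G4, gaddA.
  - intros x y Hx Hxc Hy Hyc.
    destruct (riesz_decomp_of_RIP rip x d12 e12 Hx Hxc D12 F12)
      as [x1 [x2 [-> [X1 [X1c [X2 X2c]]]]]].
    rewrite <- gaddA, (Ce x2 y), gaddA, (Cd x1 y), <- gaddA; auto.
    now apply (gle_trans G _ e21).
Qed.

Lemma rdp1_on_unbounded (u : G) (B : G -> Prop) : strong_unit G u -> RIP G ->
  (forall b d, B b -> 0 <= d -> d <= b -> B d) ->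
  rdp1_on (fun a => a <= u) B -> rdp1_on (fun _ => True) B.
Proof.
  intros [Hu Hunit] rip Bdown Hbase a1 a2 b1 b2 Ha1 Ha2 Hb1 Hb2 _ Bb1 E.
  destruct (Hunit a1) as [k [_ Hk]].
  revert a1 a2 b1 b2 Ha1 Ha2 Hb1 Hb2 Bb1 E Hk.
  induction k as [|k IH]; intros a1 a2 b1 b2 Ha1 Ha2 Hb1 Hb2 Bb1 E Hk; simpl in Hk.
  - apply Hbase; auto. now apply (gle_trans G _ 0).
  - destruct (riesz_decomp_of_RIP rip a1 u (gnat k u) Ha1 Hk Hu (gnat_ge0 u k Hu))
      as [p [q [-> [Hp [Hpu [Hq Hqk]]]]]].
    apply rdp1_table_stack; auto.
    + apply Hbase; auto; [now apply gadd_ge0 | now rewrite <- E, gaddA].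
    + intros d21 d22 D21 Dle D22 Ed. apply IH; eauto.
Qed.

End PoGroup.

Theorem theorem3p6 (G : pogroup) (u : G) :
  strong_unit G u -> RIP G -> RDP1_Gamma G u -> RDP1_group G.
Proof.
  intros Hunit rip rdp.
  assert (Hdown : forall b d : G, b <= u -> 0 <= d -> d <= b -> d <= u)
    by (intros b d Hb _ Hd; now apply (gle_trans G _ b)).
  assert (Hb1_bounded : rdp1_on G (fun _ => True) (fun b => b <= u))
    by (apply (rdp1_on_unbounded G u); auto using rdp1_on_Gamma).
  assert (Hunbounded : rdp1_on G (fun _ => True) (fun _ => True))
    by (apply (rdp1_on_unbounded G u); auto using rdp1_on_sym).
  intros a1 a2 b1 b2 Ha1 Ha2 Hb1 Hb2 E.
  now apply Hunbounded.
Qed.
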